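(* Let $X,Y$ be countable discrete metric spaces, $d\in D(X,Y)$, $d'\in D(Y,X)$ with $M_{d\circ d'}(Y,Y)=M_{d^0}(Y,Y)$ and $M_{d'\circ d}(X,X)=M_{d^0}(X,X)$. Then $X$ and $Y$ are almost isometric: there exist almost isometries $f:X\to Y$, $g:Y\to X$ and $C>0$ with $d_X(g(f(x)),x)<C$ and $d_Y(f(g(y)),y)<C$ for all $x\in X$, $y\in Y$.
   Context: $D(X,Y)$: metrics on $X\sqcup Y$ extending $d_X,d_Y$. Composites: $(d'\circ d)(x_1,x_2')=\inf_{y\in Y}(d(x_1,y)+d'(y,x_2'))$ on $X\sqcup X'$ ($X'$ a copy of $X$), similarly $(d\circ d')(y_1,y_2')=\inf_{x\in X}(d'(y_1,x)+d(x,y_2'))$. For such a function $\rho$ on $X\sqcup X'$, $M_\rho(X,X)$ is the norm closure of bounded operators $T$ on $l^2(X)$ for which there is $L$ with $\langle T\delta_{x_1},\delta_{x_2}\rangle=0$ whenever $\rho(x_1,x_2')\ge L$. $d^0(x_1,x_2')=d_X(x_1,x_2)+1$, so $M_{d^0}(X,X)=C^*_u(X)$. An almost isometry $f:X\to Y$ satisfies $d_X(x,x')-C\le d_Y(f(x),f(x'))\le d_X(x,x')+C$ for some $C>0$. *)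

From Stdlib Require Import Reals List.
Open Scope R_scope.

Definition C : Type := (R * R)%type.
Definition C0 : C := (0, 0).
Definition Cplus (a b : C) : C := (fst a + fst b, snd a + snd b).
Definition Csub (a b : C) : C := (fst a - fst b, snd a - snd b).
Definition Cmult (a b : C) : C :=
  (fst a * fst b - snd a * snd b, fst a * snd b + snd a * fst b).
Definition Cconj (a : C) : C := (fst a, - snd a).
Definition Cmod (a : C) : R := sqrt (fst a ^ 2 + snd a ^ 2).

Definition Csum {A : Type} (s : list A) (f : A -> C) : C :=
  fold_right (fun a acc => Cplus (f a) acc) C0 s.
Definition Rsum {A : Type} (s : list A) (f : A -> R) : R :=
  fold_right (fun a acc => f a + acc) 0 s.

Definition is_metric {T : Type} (d : T -> T -> R) : Prop :=
  (forall x y, 0 <= d x y) /\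
  (forall x y, d x y = 0 <-> x = y) /\
  (forall x y, d x y = d y x) /\
  (forall x y z, d x z <= d x y + d y z).

Definition countable (T : Type) : Prop :=
  exists f : T -> nat, forall x y, f x = f y -> x = y.

Definition discrete_metric {T : Type} (d : T -> T -> R) : Prop :=
  forall x, exists r, 0 < r /\ forall y, d x y < r -> y = x.

(* D(X,Y): metrics on X ⊔ Y (= sum type X + Y) extending dX and dY *)
Definition in_D {X Y : Type} (dX : X -> X -> R) (dY : Y -> Y -> R)
  (d : X + Y -> X + Y -> R) : Prop :=
  is_metric d /\
  (forall x x', d (inl x) (inl x') = dX x x') /\
  (forall y y', d (inr y) (inr y') = dY y y').

(* Bounded operators on l^2(X) represented by their matrices:
   T x1 x2 = <T δ_{x1}, δ_{x2}>. Boundedness / norm estimates are tested on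
   finitely supported vectors (dense in l^2(X)). *)
Definition opmat (X : Type) : Type := X -> X -> C.

Definition finvec {X : Type} (s : list X) (v : X -> C) : Prop :=
  NoDup s /\ forall x, ~ In x s -> v x = C0.

Definition vnorm {X : Type} (s : list X) (v : X -> C) : R :=
  sqrt (Rsum s (fun x => Cmod (v x) ^ 2)).

(* <T v, u> for finitely supported v (support in s) and u (support in t) *)
Definition bform {X : Type} (T : opmat X) (s : list X) (v : X -> C)
  (t : list X) (u : X -> C) : C :=
  Csum s (fun x1 => Csum t (fun x2 =>
    Cmult (Cmult (T x1 x2) (v x1)) (Cconj (u x2)))).

Definition op_norm_le {X : Type} (T : opmat X) (eps : R) : Prop :=
  forall s v t u, finvec s v -> finvec t u ->
    Cmod (bform T s v t u) <= eps * vnorm s v * vnorm t u.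

Definition bounded_op {X : Type} (T : opmat X) : Prop :=
  exists K, op_norm_le T K.

Definition op_sub {X : Type} (T S : opmat X) : opmat X :=
  fun x1 x2 => Csub (T x1 x2) (S x1 x2).

(* A function rho on X ⊔ X' is encoded by the predicate
   rho_ge x1 x2 L  :<->  rho(x1, x2') >= L
   (this allows rho to be an infimum, possibly over an empty set). *)
Definition finite_prop {X : Type} (rho_ge : X -> X -> R -> Prop)
  (T : opmat X) : Prop :=
  exists L, forall x1 x2, rho_ge x1 x2 L -> T x1 x2 = C0.

(* M_rho(X,X): norm closure of bounded operators of finite rho-propagation *)
Definition M_rho {X : Type} (rho_ge : X -> X -> R -> Prop) (T : opmat X) : Prop :=
  bounded_op T /\
  forall eps, 0 < eps -> exists S,
    bounded_op S /\ finite_prop rho_ge S /\ op_norm_le (op_sub T S) eps.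

(* (d' ∘ d)(x1,x2') = inf_y (d(x1,y) + d'(y,x2')) >= L *)
Definition comp_XX {X Y : Type} (d : X + Y -> X + Y -> R) (d' : Y + X -> Y + X -> R)
  : X -> X -> R -> Prop :=
  fun x1 x2 L => forall y : Y, d (inl x1) (inr y) + d' (inl y) (inr x2) >= L.

(* (d ∘ d')(y1,y2') = inf_x (d'(y1,x) + d(x,y2')) >= L *)
Definition comp_YY {X Y : Type} (d : X + Y -> X + Y -> R) (d' : Y + X -> Y + X -> R)
  : Y -> Y -> R -> Prop :=
  fun y1 y2 L => forall x : X, d' (inl y1) (inr x) + d (inl x) (inr y2) >= L.

(* d^0(x1,x2') = d_X(x1,x2) + 1 >= L *)
Definition d0_ge {X : Type} (dX : X -> X -> R) : X -> X -> R -> Prop :=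
  fun x1 x2 L => dX x1 x2 + 1 >= L.

Definition almost_isometry {X Y : Type} (dX : X -> X -> R) (dY : Y -> Y -> R)
  (f : X -> Y) : Prop :=
  exists C, 0 < C /\ forall x x',
    dX x x' - C <= dY (f x) (f x') /\ dY (f x) (f x') <= dX x x' + C.

(* If the Roe-type algebras M_{d' o d}(X,X) and M_{d^0}(X,X) coincide, then the
   identity operator, which lies in M_{d^0}(X,X) = C*_u(X), also lies in
   M_{d' o d}(X,X).  Approximating it within 1/2 by an operator S of finite
   (d' o d)-propagation L, every diagonal entry S x x must be nonzero (an
   operator of norm <= 1/2 has diagonal entries of modulus <= 1/2), so
   (d' o d)(x, x') < L for every x: there is y with d(x,y) + d'(y,x) < L.
   Choosing such a y for each x gives f : X -> Y, and symmetrically g : Y -> X.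
   A map moving every point by a bounded amount inside a metric on X ⊔ Y is an
   almost isometry, and the two bounds combine into g o f ~ id, f o g ~ id. *)

From Pilot Require Import Defs.
From Stdlib Require Import Reals List Lra Classical ClassicalEpsilon.
Require Coquelicot.Complex.
Open Scope R_scope.

(* The complex modulus facts we need, transported from Coquelicot, whose
   complex numbers are the same pairs of reals. *)
Lemma Cmod_triangle (a b : Defs.C) : Cmod (Cplus a b) <= Cmod a + Cmod b.
Proof. exact (Coquelicot.Complex.Cmod_triangle a b). Qed.

Lemma Cmod_mult (a b : Defs.C) : Cmod (Cmult a b) = Cmod a * Cmod b.
Proof. exact (Coquelicot.Complex.Cmod_mult a b). Qed.

Lemma Cmod_conj (a : Defs.C) : Cmod (Cconj a) = Cmod a.
Proof. exact (Coquelicot.Complex.Cmod_conj a). Qed.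

Lemma Cmod_ge0 (a : Defs.C) : 0 <= Cmod a.
Proof. apply sqrt_pos. Qed.

Lemma Cmod_C0 : Cmod C0 = 0.
Proof. exact Coquelicot.Complex.Cmod_0. Qed.

Lemma Cmod_one : Cmod (1, 0) = 1.
Proof. exact Coquelicot.Complex.Cmod_1. Qed.

Lemma Csub_diag (a : Defs.C) : Csub a a = C0.
Proof. destruct a; unfold Csub, C0; simpl; f_equal; ring. Qed.

Lemma weighted_amgm (l p q : R) : 0 < l -> p * q <= l / 2 * p ^ 2 + / (2 * l) * q ^ 2.
Proof.
  intros Hl.
  assert (Hsq : 0 <= (l * p - q) ^ 2 / (2 * l)).
  { apply Rmult_le_pos; [apply pow2_ge_0 | left; apply Rinv_0_lt_compat; lra]. }
  assert (E : l / 2 * p ^ 2 + / (2 * l) * q ^ 2 = p * q + (l * p - q) ^ 2 / (2 * l))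
    by (field; lra).
  lra.
Qed.

Lemma square_div_le (a c : R) : 0 <= a -> a <= c -> 0 < c -> a * a / c <= c.
Proof.
  intros Ha Hac Hc.
  replace (a * a / c) with (c - (c * c - a * a) / c) by (field; lra).
  assert (0 <= (c * c - a * a) / c)
    by (apply Rmult_le_pos; [nra | left; apply Rinv_0_lt_compat; lra]).
  lra.
Qed.

(* Optimising the AM-GM weight: a quantity dominated by l A/2 + B/(2l) for
   every l > 0 is dominated by sqrt A * sqrt B. *)
Lemma le_sqrt_mult_of_weighted (Q A B : R) : 0 <= A -> 0 <= B ->
  (forall l, 0 < l -> Q <= l * A / 2 + B / (2 * l)) -> Q <= sqrt A * sqrt B.
Proof.
  intros HA HB H.
  pose proof (sqrt_pos A) as Ha; pose proof (sqrt_pos B) as Hb.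
  pose proof (sqrt_sqrt A HA) as EA; pose proof (sqrt_sqrt B HB) as EB.
  set (a := sqrt A) in *; set (b := sqrt B) in *.
  apply Rnot_lt_le; intros Hlt.
  (* With eps small, the weight l = (b + eps)/(a + eps) gives Q <= (a+eps)(b+eps) < Q. *)
  set (eps := (Q - a * b) / (a + b + 1 + (Q - a * b))).
  assert (Heps : 0 < eps < 1).
  { unfold eps; split.
    - apply Rdiv_lt_0_compat; lra.
    - apply Rmult_lt_reg_r with (a + b + 1 + (Q - a * b)); [lra|].
      unfold Rdiv; rewrite Rmult_assoc, Rinv_l by lra; lra. }
  assert (Hsmall : eps * (a + b + eps) < Q - a * b).
  { assert (eps * (a + b + 1 + (Q - a * b)) = Q - a * b)
      by (unfold eps; field; lra).
    nra. }
  assert (Hl : 0 < (b + eps) / (a + eps)) by (apply Rdiv_lt_0_compat; lra).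
  specialize (H _ Hl); rewrite <- EA, <- EB in H.
  assert (Hbound : (b + eps) / (a + eps) * (a * a) / 2 + b * b / (2 * ((b + eps) / (a + eps)))
                   <= (a + eps) * (b + eps)).
  { replace ((b + eps) / (a + eps) * (a * a) / 2 + b * b / (2 * ((b + eps) / (a + eps))))
      with ((b + eps) * (a * a / (a + eps)) / 2 + (a + eps) * (b * b / (b + eps)) / 2)
      by (field; lra).
    assert ((b + eps) * (a * a / (a + eps)) <= (b + eps) * (a + eps))
      by (apply Rmult_le_compat_l; [lra | apply square_div_le; lra]).
    assert ((a + eps) * (b * b / (b + eps)) <= (a + eps) * (b + eps))
      by (apply Rmult_le_compat_l; [lra | apply square_div_le; lra]).
    lra. }
  nra.
Qed.

Section FiniteSums.
Context {A : Type}.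

Lemma Rsum_le (s : list A) (f g : A -> R) :
  (forall x, f x <= g x) -> Rsum s f <= Rsum s g.
Proof. intros H; induction s as [|a s IH]; simpl; [lra|]. specialize (H a); lra. Qed.

Lemma Rsum_ext (s : list A) (f g : A -> R) :
  (forall x, f x = g x) -> Rsum s f = Rsum s g.
Proof. intros H; induction s as [|a s IH]; simpl; [lra|]. rewrite H, IH; lra. Qed.

Lemma Rsum_plus (s : list A) (f g : A -> R) :
  Rsum s (fun x => f x + g x) = Rsum s f + Rsum s g.
Proof. induction s as [|a s IH]; simpl; [lra|]. rewrite IH; lra. Qed.

Lemma Rsum_scal (s : list A) (c : R) (f : A -> R) :
  Rsum s (fun x => c * f x) = c * Rsum s f.
Proof. induction s as [|a s IH]; simpl; [lra|]. rewrite IH; lra. Qed.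

Lemma Rsum_zero (s : list A) : Rsum s (fun _ => 0) = 0.
Proof. induction s as [|a s IH]; simpl; lra. Qed.

Lemma Rsum_nonneg (s : list A) (f : A -> R) : (forall x, 0 <= f x) -> 0 <= Rsum s f.
Proof. intros H; induction s as [|a s IH]; simpl; [lra|]. specialize (H a); lra. Qed.

Lemma Rsum_swap (s t : list A) (F : A -> A -> R) :
  Rsum s (fun a => Rsum t (fun b => F a b)) = Rsum t (fun b => Rsum s (fun a => F a b)).
Proof.
  induction s as [|a s IH]; simpl.
  - symmetry; apply Rsum_zero.
  - rewrite IH, <- Rsum_plus; reflexivity.
Qed.

Lemma Csum_bound (s : list A) (f : A -> Defs.C) :
  Cmod (Csum s f) <= Rsum s (fun x => Cmod (f x)).
Proof.
  induction s as [|a s IH]; simpl.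
  - rewrite Cmod_C0; lra.
  - eapply Rle_trans; [apply Cmod_triangle | lra].
Qed.

End FiniteSums.

Section Operators.
Context {A : Type}.

Lemma bform_bound (T : opmat A) s v t u :
  Cmod (bform T s v t u) <=
  Rsum s (fun a => Rsum t (fun b => Cmod (T a b) * Cmod (v a) * Cmod (u b))).
Proof.
  unfold bform. eapply Rle_trans; [apply Csum_bound|].
  apply Rsum_le; intros a. eapply Rle_trans; [apply Csum_bound|].
  apply Rsum_le; intros b. rewrite !Cmod_mult, Cmod_conj. lra.
Qed.

Lemma schur_test (T : opmat A) :
  (forall a t, NoDup t -> Rsum t (fun b => Cmod (T a b)) <= 1) ->
  (forall b s, NoDup s -> Rsum s (fun a => Cmod (T a b)) <= 1) ->
  op_norm_le T 1.
Proof.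
  intros Hrow Hcol s v t u [Hs _] [Ht _].
  eapply Rle_trans; [apply bform_bound|].
  unfold vnorm; rewrite Rmult_1_l.
  apply le_sqrt_mult_of_weighted;
    [apply Rsum_nonneg; intros; apply pow2_ge_0 ..|].
  intros l Hl.
  set (P := fun a => l / 2 * Cmod (v a) ^ 2).
  set (Q := fun b => / (2 * l) * Cmod (u b) ^ 2).
  assert (HP : forall a, 0 <= P a)
    by (intro; apply Rmult_le_pos; [lra | apply pow2_ge_0]).
  assert (HQ : forall b, 0 <= Q b).
  { intro; apply Rmult_le_pos; [left; apply Rinv_0_lt_compat; lra | apply pow2_ge_0]. }
  assert (Hsplit : forall a b, Cmod (T a b) * Cmod (v a) * Cmod (u b)
                     <= P a * Cmod (T a b) + Q b * Cmod (T a b)).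
  { intros a b; rewrite Rmult_assoc.
    pose proof (weighted_amgm l (Cmod (v a)) (Cmod (u b)) Hl).
    pose proof (Cmod_ge0 (T a b)); unfold P, Q; nra. }
  assert (HrowP : Rsum s (fun a => Rsum t (fun b => P a * Cmod (T a b))) <= Rsum s P).
  { apply Rsum_le; intro a; rewrite Rsum_scal.
    pose proof (Hrow a t Ht); pose proof (HP a); nra. }
  assert (HcolQ : Rsum t (fun b => Rsum s (fun a => Q b * Cmod (T a b))) <= Rsum t Q).
  { apply Rsum_le; intro b; rewrite Rsum_scal.
    pose proof (Hcol b s Hs); pose proof (HQ b); nra. }
  eapply Rle_trans.
  { apply Rsum_le; intro a; apply Rsum_le; intro b; apply Hsplit. }
  erewrite Rsum_ext; [|intro a; apply Rsum_plus].
  rewrite Rsum_plus, (Rsum_swap s t (fun a b => Q b * Cmod (T a b))).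
  unfold P, Q in *; rewrite !Rsum_scal in *.
  replace (/ (2 * l) * Rsum t (fun x => Cmod (u x) ^ 2))
    with (Rsum t (fun x => Cmod (u x) ^ 2) / (2 * l)) in HcolQ by (field; lra).
  lra.
Qed.

Lemma op_norm_le_zero (T : opmat A) (eps : R) :
  (forall a b, T a b = C0) -> 0 <= eps -> op_norm_le T eps.
Proof.
  intros H0 Heps s v t u _ _.
  eapply Rle_trans; [apply bform_bound|].
  rewrite (Rsum_ext s _ (fun _ => 0)), Rsum_zero.
  - unfold vnorm; pose proof (sqrt_pos (Rsum s (fun x => Cmod (v x) ^ 2))).
    pose proof (sqrt_pos (Rsum t (fun x => Cmod (u x) ^ 2))).
    apply Rmult_le_pos; [apply Rmult_le_pos|]; lra.
  - intro a; rewrite (Rsum_ext t _ (fun _ => 0)), Rsum_zero; [reflexivity|].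
    intro b; rewrite H0, Cmod_C0; ring.
Qed.

Definition Idm : opmat A := fun a b =>
  if excluded_middle_informative (a = b) then (1, 0) else C0.

Lemma Idm_sym (a b : A) : Idm a b = Idm b a.
Proof.
  unfold Idm; do 2 destruct excluded_middle_informative; subst; congruence.
Qed.

Lemma Idm_row_sum (a : A) (t : list A) :
  NoDup t -> Rsum t (fun b => Cmod (Idm a b)) <= 1.
Proof.
  assert (Hout : forall s, ~ In a s -> Rsum s (fun b => Cmod (Idm a b)) = 0).
  { intros s; induction s as [|b s IH]; intros Hn; simpl; [lra|].
    rewrite IH by (intro; apply Hn; right; auto).
    unfold Idm; destruct excluded_middle_informative as [->|_].
    - exfalso; apply Hn; left; auto.
    - rewrite Cmod_C0; lra. }
  induction 1 as [|b t Hb _ IH]; simpl; [lra|].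
  unfold Idm at 1; destruct excluded_middle_informative as [->|_].
  - rewrite Hout, Cmod_one by exact Hb; lra.
  - rewrite Cmod_C0; lra.
Qed.

Lemma Idm_norm_le_1 : op_norm_le Idm 1.
Proof.
  apply schur_test; intros b s Hs; [apply Idm_row_sum; exact Hs|].
  rewrite (Rsum_ext s _ (fun a => Cmod (Idm b a))) by (intro; rewrite Idm_sym; reflexivity).
  apply Idm_row_sum; exact Hs.
Qed.

(* The identity has d^0-propagation 2, so it belongs to C*_u(A) = M_{d^0}. *)
Lemma Idm_in_M_d0 (dA : A -> A -> R) : is_metric dA -> M_rho (d0_ge dA) Idm.
Proof.
  intros [_ [Hzero _]].
  split; [exists 1; exact Idm_norm_le_1|].
  intros eps Heps; exists Idm; repeat split.
  - exists 1; exact Idm_norm_le_1.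
  - exists 2; intros a b Hge; unfold Idm, d0_ge in *.
    destruct excluded_middle_informative as [->|_]; [|reflexivity].
    assert (dA b b = 0) by (apply Hzero; reflexivity); lra.
  - apply op_norm_le_zero; [intros; apply Csub_diag | lra].
Qed.

(* A diagonal entry is dominated by the operator norm (test on delta_x). *)
Lemma diag_le (T : opmat A) (eps : R) (x : A) : op_norm_le T eps -> Cmod (T x x) <= eps.
Proof.
  intros H.
  set (e := fun z : A => if excluded_middle_informative (z = x) then ((1, 0) : Defs.C) else C0).
  assert (ex : e x = (1, 0)) by (unfold e; destruct excluded_middle_informative; congruence).
  assert (He : finvec (x :: nil) e).
  { split; [constructor; [simpl; auto | constructor]|].
    intros z Hz; unfold e; destruct excluded_middle_informative as [->|_]; [|reflexivity].
    exfalso; apply Hz; left; reflexivity. }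
  assert (Hnorm : vnorm (x :: nil) e = 1).
  { unfold vnorm; simpl; rewrite ex, Cmod_one.
    replace (1 * (1 * 1) + 0) with 1 by ring; apply sqrt_1. }
  assert (Hform : bform T (x :: nil) e (x :: nil) e = T x x).
  { unfold bform, Csum; simpl; rewrite ex; destruct (T x x) as [p q].
    unfold Cplus, Cmult, Cconj, C0; simpl; f_equal; ring. }
  specialize (H _ _ _ _ He He); rewrite Hnorm, Hform in H; lra.
Qed.

Lemma diagonal_propagation (rho : A -> A -> R -> Prop) :
  M_rho rho Idm -> exists L, forall x, ~ rho x x L.
Proof.
  intros [_ Happrox].
  destruct (Happrox (1 / 2)) as [S [_ [[L HL] Hclose]]]; [lra|].
  exists L; intros x Hrho.
  pose proof (diag_le _ _ x Hclose) as Hd.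
  unfold op_sub in Hd; rewrite (HL _ _ Hrho) in Hd.
  unfold Idm in Hd; destruct excluded_middle_informative as [_|n]; [|now apply n].
  unfold Csub, C0 in Hd; simpl in Hd.
  replace (1 - 0, 0 - 0) with ((1, 0) : Defs.C) in Hd by (f_equal; ring).
  rewrite Cmod_one in Hd; lra.
Qed.

End Operators.

Section DisjointUnionGeometry.
Variables (X Y : Type) (dX : X -> X -> R) (dY : Y -> Y -> R) (d : X + Y -> X + Y -> R).
Hypothesis Hd : in_D dX dY d.

Lemma cross_shift_X (x x' : X) (y : Y) : d (inl x) (inr y) <= dX x x' + d (inl x') (inr y).
Proof.
  destruct Hd as [[_ [_ [_ Htri]]] [HX _]].
  rewrite <- HX; apply Htri.
Qed.

Lemma cross_shift_Y (x : X) (y y' : Y) : d (inl x) (inr y) <= d (inl x) (inr y') + dY y y'.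
Proof.
  destruct Hd as [[_ [_ [Hsym Htri]]] [_ HY]].
  rewrite <- HY, (Hsym (inr y) (inr y')); apply Htri.
Qed.

Lemma cross_le_X (x x' : X) (y : Y) : dX x x' <= d (inl x) (inr y) + d (inl x') (inr y).
Proof.
  destruct Hd as [[_ [_ [Hsym Htri]]] [HX _]].
  rewrite <- HX, (Hsym (inl x') (inr y)); apply Htri.
Qed.

Lemma cross_le_Y (x : X) (y y' : Y) : dY y y' <= d (inl x) (inr y) + d (inl x) (inr y').
Proof.
  destruct Hd as [[_ [_ [Hsym Htri]]] [_ HY]].
  rewrite <- HY, (Hsym (inl x) (inr y)); apply Htri.
Qed.

Lemma close_map_almost_isometry (f : X -> Y) (K : R) :
  0 < K -> (forall x, d (inl x) (inr (f x)) < K) -> almost_isometry dX dY f.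
Proof.
  intros HK Hf; exists (2 * K); split; [lra|]; intros x x'; split.
  - pose proof (cross_le_X x x' (f x)); pose proof (cross_shift_Y x' (f x) (f x')).
    pose proof (Hf x); pose proof (Hf x'); lra.
  - pose proof (cross_le_Y x (f x) (f x')); pose proof (cross_shift_X x x' (f x')).
    pose proof (Hf x); pose proof (Hf x'); lra.
Qed.

End DisjointUnionGeometry.

(* A diagonal bound L for the composite d' o d yields a map f moving each point
   by less than L both in d and in d'.  (comp_YY d d' is comp_XX d' d.) *)
Lemma choose_close_map {A B : Type} (e : A + B -> A + B -> R) (e' : B + A -> B + A -> R)
  (L : R) : is_metric e -> is_metric e' -> (forall a, ~ comp_XX e e' a a L) ->
  exists f : A -> B, forall a, e (inl a) (inr (f a)) < L /\ e' (inl (f a)) (inr a) < L.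
Proof.
  intros [He _] [He' _] Hdiag.
  apply (choice (fun a b => e (inl a) (inr b) < L /\ e' (inl b) (inr a) < L)); intro a.
  destruct (not_all_ex_not _ _ (Hdiag a)) as [b Hb].
  exists b; pose proof (He (inl a) (inr b)); pose proof (He' (inl b) (inr a)); lra.
Qed.

Theorem corollary4p3 (X Y : Type) (dX : X -> X -> R) (dY : Y -> Y -> R)
  (HmX : is_metric dX) (HmY : is_metric dY)
  (HcX : countable X) (HcY : countable Y)
  (HdX : discrete_metric dX) (HdY : discrete_metric dY)
  (d : X + Y -> X + Y -> R) (d' : Y + X -> Y + X -> R)
  (Hd : in_D dX dY d) (Hd' : in_D dY dX d')
  (HY : forall T : opmat Y, M_rho (comp_YY d d') T <-> M_rho (d0_ge dY) T)
  (HX : forall T : opmat X, M_rho (comp_XX d d') T <-> M_rho (d0_ge dX) T) :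
  exists (f : X -> Y) (g : Y -> X) (C : R),
    almost_isometry dX dY f /\ almost_isometry dY dX g /\ 0 < C /\
    (forall x, dX (g (f x)) x < C) /\ (forall y, dY (f (g y)) y < C).
Proof.
  destruct (diagonal_propagation _ (proj2 (HX Idm) (Idm_in_M_d0 dX HmX))) as [L1 HL1].
  destruct (diagonal_propagation _ (proj2 (HY Idm) (Idm_in_M_d0 dY HmY))) as [L2 HL2].
  destruct (choose_close_map d d' L1 (proj1 Hd) (proj1 Hd') HL1) as [f Hf].
  destruct (choose_close_map d' d L2 (proj1 Hd') (proj1 Hd) HL2) as [g Hg].
  set (K := Rmax 1 (Rmax L1 L2)).
  assert (HK : 0 < K /\ L1 <= K /\ L2 <= K).
  { unfold K; pose proof (Rmax_l 1 (Rmax L1 L2)); pose proof (Rmax_r 1 (Rmax L1 L2)).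
    pose proof (Rmax_l L1 L2); pose proof (Rmax_r L1 L2); lra. }
  exists f, g, (2 * K); repeat split.
  - apply (close_map_almost_isometry X Y dX dY d Hd f K); [lra|].
    intro x; pose proof (Hf x); lra.
  - apply (close_map_almost_isometry Y X dY dX d' Hd' g K); [lra|].
    intro y; pose proof (Hg y); lra.
  - lra.
  - intro x; pose proof (cross_le_Y Y X dY dX d' Hd' (f x) (g (f x)) x).
    pose proof (Hf x); pose proof (Hg (f x)); lra.
  - intro y; pose proof (cross_le_Y X Y dX dY d Hd (g y) (f (g y)) y).
    pose proof (Hf (g y)); pose proof (Hg y); lra.
Qed.
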